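(* Let $A,B$ be idempotent torsion-free $\Gamma$-graded rings and let $F:A\text{-gr}\to B\text{-gr}$ and $G:B\text{-gr}\to A\text{-gr}$ be inverse graded category equivalences. Set $P=G(B)$ and $Q=F(A)$, with right actions $p\cdot b=G(\rho_b)(p)$ and $q\cdot a=F(\rho_a)(q)$. Then there are natural graded isomorphisms of functors $G\cong A\cdot\mathrm{HOM}_B(F(A),-)=A\cdot\mathrm{HOM}_B(Q,-)$ and $F\cong B\cdot\mathrm{HOM}_A(G(B),-)=B\cdot\mathrm{HOM}_A(P,-)$.
   Context: $\Gamma$ is a fixed multiplicative group. Rings are associative $\Gamma$-graded, not necessarily unital. $A$ is idempotent if $A^2=A$, torsion-free if $Aa=0\Rightarrow a=0$ and $aA=0\Rightarrow a=0$. A graded module is unital if $AM=M$, torsion-free if $Am=0\Rightarrow m=0$. $A\text{-gr}$ is the category of unital torsion-free graded left $A$-modules with degree-preserving maps. Suspension: $M(\sigma)_\tau=M_{\tau\sigma}$. A graded functor is an additive functor commuting with suspensions ($F(M(\sigma))=F(M)(\sigma)$); a graded category equivalence is a graded functor which is an equivalence. A left-linear $f$ is graded of degree $\sigma$ if $f(M_\tau)\subseteq N_{\tau\sigma}$; $\mathrm{HOM}$ is the direct sum over all degrees. Since $\mathrm{HOM}_A(M,N)_\sigma=\mathrm{Hom}_{A\text{-gr}}(M(\sigma^{-1}),N)$, $F$ induces maps on $\mathrm{HOM}$, still denoted $F$. $\rho_a$ is right multiplication by $a$ on $A$. For $N\in B\text{-gr}$, $\mathrm{HOM}_B(Q,N)$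 is a left $A$-module via $(af)(q)=f(qa)$ and $A\cdot\mathrm{HOM}_B(Q,N)$ denotes the finite sums $\sum a_if_i$; similarly $\mathrm{HOM}_A(P,M)$ is a left $B$-module via $(bf)(p)=f(pb)$. *)

From HB Require Import structures.
From mathcomp Require Import all_boot all_algebra.
Set Implicit Arguments. Unset Strict Implicit. Unset Printing Implicit Defensive.
Import GRing.Theory.
Local Open Scope ring_scope.

Section Defs.
Variable Gam : groupType.

(* D : Gam -> V -> Prop is a grading of the abelian group V:
   V = (+)_s D s (internal direct sum of subgroups). *)
Definition is_grading (V : zmodType) (D : Gam -> V -> Prop) : Prop :=
  [/\ (forall s, D s 0),
      (forall s x y, D s x -> D s y -> D s (x - y)),
      (forall v : V, exists n (d : 'I_n -> Gam) (x : 'I_n -> V),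
          (forall i, D (d i) (x i)) /\ v = \sum_(i < n) x i) &
      (forall n (d : 'I_n -> Gam) (x : 'I_n -> V), injective d ->
          (forall i, D (d i) (x i)) -> \sum_(i < n) x i = 0 ->
          forall i, x i = 0)].

Record nuRing := NuRing {
  nr_car :> zmodType;
  nr_mul : nr_car -> nr_car -> nr_car;
  nr_mulA : associative nr_mul;
  nr_mulDl : left_distributive nr_mul +%R;
  nr_mulDr : right_distributive nr_mul +%R }.

Record grRing := GrRing {
  gr_base :> nuRing;
  gr_deg : Gam -> nr_car gr_base -> Prop;
  gr_grading : is_grading gr_deg;
  gr_mul_deg : forall s t a b, gr_deg s a -> gr_deg t b ->
                 gr_deg (s * t)%g (nr_mul a b) }.

(* A^2 = A *)
Definition gr_idempotent (A : grRing) : Prop :=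
  forall a : A, exists n (x y : 'I_n -> A), a = \sum_(i < n) nr_mul (x i) (y i).

Definition gr_torsionfree (A : grRing) : Prop :=
  (forall a : A, (forall b : A, nr_mul b a = 0) -> a = 0) /\
  (forall a : A, (forall b : A, nr_mul a b = 0) -> a = 0).

(* objects of A-gr: unital torsion-free graded left A-modules *)
Record grObj (A : grRing) := GrObj {
  go_car :> zmodType;
  go_act : A -> go_car -> go_car;
  go_actDl : forall (a b : A) m, go_act (a + b) m = go_act a m + go_act b m;
  go_actDr : forall a (m n : go_car), go_act a (m + n) = go_act a m + go_act a n;
  go_actA : forall a b m, go_act (nr_mul a b) m = go_act a (go_act b m);
  go_deg : Gam -> go_car -> Prop;
  go_grading : is_grading go_deg;
  go_act_deg : forall s t a m, gr_deg s a -> go_deg t m ->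
                 go_deg (s * t)%g (go_act a m);
  go_unital : forall m, exists n (a : 'I_n -> A) (x : 'I_n -> go_car),
                 m = \sum_(i < n) go_act (a i) (x i);
  go_tfree : forall m, (forall a, go_act a m = 0) -> m = 0 }.

Section Mod.
Variable A : grRing.

Definition is_grmap (s : Gam) (M N : grObj A) (f : M -> N) : Prop :=
  [/\ (forall x y, f (x + y) = f x + f y),
      (forall a x, f (go_act a x) = go_act a (f x)) &
      (forall t x, go_deg t x -> go_deg (t * s)%g (f x))].

Definition is_grhom (M N : grObj A) (f : M -> N) : Prop :=
  [/\ (forall x y, f (x + y) = f x + f y),
      (forall a x, f (go_act a x) = go_act a (f x)) &
      (forall t x, go_deg t x -> go_deg t (f x))].

Definition grHom (M N : grObj A) := {f : M -> N | is_grhom f}.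

(* suspension M(s)_t = M_(t s) *)
Lemma susp_grading (M : grObj A) (s : Gam) :
  is_grading (fun t (m : M) => go_deg (t * s)%g m).
Proof.
have [H0 HB HS HI] := go_grading M.
split.
- by move=> t; apply: H0.
- by move=> t x y; apply: HB.
- move=> v; have [n [d [x [Hx ->]]]] := HS v.
  exists n, (fun i => d i * s^-1)%g, x; split => // i.
  by rewrite mulgVK.
- move=> n d x injd Hx Hsum; apply: (HI n (fun i => d i * s)%g) => //.
  by move=> i j /mulIg /injd.
Qed.

Lemma susp_act_deg (M : grObj A) (s : Gam) :
  forall r t a (m : M), gr_deg r a -> go_deg (t * s)%g m ->
    go_deg ((r * t) * s)%g (go_act a m).
Proof. by move=> r t a m Ha Hm; rewrite -mulgA; apply: go_act_deg. Qed.

Definition susp (s : Gam) (M : grObj A) : grObj A :=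
  @GrObj A M (@go_act A M) (@go_actDl A M) (@go_actDr A M) (@go_actA A M)
    (fun t m => go_deg (t * s)%g m) (susp_grading M s)
    (@susp_act_deg M s) (@go_unital A M) (@go_tfree A M).

Lemma reg_actA (a b m : A) : nr_mul (nr_mul a b) m = nr_mul a (nr_mul b m).
Proof. by rewrite nr_mulA. Qed.

Definition regObj (HI : gr_idempotent A) (HT : gr_torsionfree A) : grObj A :=
  @GrObj A A (@nr_mul A) (@nr_mulDl A) (@nr_mulDr A) reg_actA
    (@gr_deg A) (@gr_grading A) (@gr_mul_deg A) HI (proj1 HT).

Lemma rmul_grhom HI HT (r : Gam) (a : A) (Ha : gr_deg r a) :
  @is_grhom (susp r^-1 (regObj HI HT)) (regObj HI HT) (fun x => nr_mul x a).
Proof.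
split.
- by move=> x y; rewrite /= nr_mulDl.
- by move=> b x; rewrite /= nr_mulA.
- move=> t x /= Hx; have := gr_mul_deg Hx Ha.
  by rewrite mulgVK.
Qed.

Definition rmulHom HI HT (r : Gam) (a : A) (Ha : gr_deg r a) :
  grHom (susp r^-1 (regObj HI HT)) (regObj HI HT) :=
  exist _ (fun x => nr_mul x a) (@rmul_grhom HI HT r a Ha).

End Mod.

Definition castO (B : grRing) (X Y : grObj B) (e : X = Y) (x : X) : Y :=
  eq_rect X (fun Z : grObj B => (Z : Type)) x Y e.

Record grFunctor (A B : grRing) := GrFunctor {
  fo : grObj A -> grObj B;
  fm : forall M N, grHom M N -> grHom (fo M) (fo N);
  fm_id : forall M (h : grHom M M), (forall x, sval h x = x) ->
            forall y, sval (fm h) y = y;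
  fm_comp : forall M N L (f : grHom M N) (g : grHom N L) (h : grHom M L),
            (forall x, sval h x = sval g (sval f x)) ->
            forall y, sval (fm h) y = sval (fm g) (sval (fm f) y);
  fm_add : forall M N (f g h : grHom M N),
            (forall x, sval h x = sval f x + sval g x) ->
            forall y, sval (fm h) y = sval (fm f) y + sval (fm g) y;
  fo_susp : forall s M, fo (susp s M) = susp s (fo M);
  fm_susp : forall s M N (f : grHom M N) (f' : grHom (susp s M) (susp s N)),
            (forall x, sval f' x = sval f x) ->
            forall y, castO (fo_susp s N) (sval (fm f') y)
                      = sval (fm f) (castO (fo_susp s M) y) }.

Definition inverse_equiv (A B : grRing) (F : grFunctor A B) (G : grFunctor B A) :=
  (exists eta : forall M : grObj A, grHom (fo G (fo F M)) M,
     (forall M, bijective (sval (eta M))) /\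
     (forall M M' (f : grHom M M') y,
        sval (eta M') (sval (fm G (fm F f)) y) = sval f (sval (eta M) y))) /\
  (exists eps : forall N : grObj B, grHom (fo F (fo G N)) N,
     (forall N, bijective (sval (eps N))) /\
     (forall N N' (g : grHom N N') y,
        sval (eps N') (sval (fm F (fm G g)) y) = sval g (sval (eps N) y))).

Section HOM.
Variables (A B : grRing) (F : grFunctor A B)
  (HI : gr_idempotent A) (HT : gr_torsionfree A).

Definition Qobj : grObj B := fo F (regObj HI HT).

(* right action q . a = F(rho_a)(q), for a homogeneous of degree r:
   F(rho_a) : F(A(r^-1)) = F(A)(r^-1) -> F(A) *)
Definition ract (r : Gam) (a : A) (Ha : gr_deg r a) (q : Qobj) : Qobj :=
  sval (fm F (@rmulHom A HI HT r a Ha))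
       (castO (esym (fo_susp F r^-1 (regObj HI HT))) q).

Definition inHOM (N : grObj B) (f : Qobj -> N) : Prop :=
  exists n (d : 'I_n -> Gam) (g : 'I_n -> Qobj -> N),
    (forall i, is_grmap (d i) (g i)) /\ forall q, f q = \sum_(i < n) g i q.

(* f in A . HOM_B(Q,N): finite sum of a_i f_i, (a f)(q) = f(q a);
   the a_i are taken homogeneous (the action being extended additively) *)
Definition inAHOM (N : grObj B) (f : Qobj -> N) : Prop :=
  exists n (d : 'I_n -> Gam) (a : 'I_n -> A) (Ha : forall i, gr_deg (d i) (a i))
         (h : 'I_n -> Qobj -> N),
    (forall i, inHOM (h i)) /\
    forall q, f q = \sum_(i < n) h i (ract (Ha i) q).

Definition HOM_repr (G : grFunctor B A) : Prop :=
  exists eta : forall N : grObj B, fo G N -> (Qobj -> N),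
    (forall N x y q, eta N (x + y) q = eta N x q + eta N y q) /\
    (forall N r a (Ha : gr_deg r a) x q,
        eta N (go_act a x) q = eta N x (ract Ha q)) /\
    (forall N s x, go_deg s x -> is_grmap s (eta N x)) /\
    (forall N x y, (forall q, eta N x q = eta N y q) -> x = y) /\
    (forall (N : grObj B) (f : Qobj -> N),
        inAHOM f <-> exists x, forall q, eta N x q = f q) /\
    (forall N N' (g : grHom N N') x q,
        eta N' (sval (fm G g) x) q = sval g (eta N x q)).

End HOM.
End Defs.

From HB Require Import structures.
From mathcomp Require Import all_boot all_algebra.
From Stdlib Require Import ProofIrrelevance FunctionalExtensionality ClassicalEpsilon.
Set Implicit Arguments. Unset Strict Implicit. Unset Printing Implicit Defensive.
Import GRing.Theory.
Local Open Scope ring_scope.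

(* For N in B-gr and x in G(N) homogeneous of degree s, left multiplication
   lambda_x : A -> G(N)(s), a |-> a x, is a morphism of A-gr; composing F(lambda_x)
   with the isomorphism F(G(N)) ~= N gives a graded map Q = F(A) -> N of degree s.
   Extending additively along homogeneous decompositions (well defined because the
   grading is a direct sum) gives theta_N : G(N) -> HOM_B(Q, N). It is A-linear
   because lambda_(a x) = lambda_x o rho_a, natural in N, and injective because F is
   faithful and G(N) is torsion-free. Its image is A . HOM_B(Q, N): as F is full,
   every graded g : Q -> N of degree d is the image of some psi : A -> G(N)(d), and
   then g(- . a) = theta_N(psi a); conversely G(N) = A G(N) since G(N) is unital.
   Exchanging F and G gives the second isomorphism. *)

Section AdditiveMaps.
Variables (V W : zmodType) (f : V -> W).
Hypothesis fD : {morph f : x y / x + y}.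

Lemma additive0 : f 0 = 0.
Proof. by apply: (@addrI _ (f 0)); rewrite -fD !addr0. Qed.

Lemma additiveN : {morph f : x / - x}.
Proof. by move=> x; apply: (@addrI _ (f x)); rewrite -fD !subrr additive0. Qed.

Lemma additive_sum I (r : seq I) (P : pred I) (F : I -> V) :
  f (\sum_(i <- r | P i) F i) = \sum_(i <- r | P i) f (F i).
Proof. exact: (big_morph f fD additive0). Qed.

End AdditiveMaps.

Lemma sum_pred1_uniq (T : eqType) (W : zmodType) (r : seq T) x (F : T -> W) :
  uniq r -> x \in r -> \sum_(s <- r | s == x) F s = F x.
Proof.
move=> ur xr; rewrite -big_filter.
have -> : [seq s <- r | s == x] = [:: x].
  by rewrite -(filter_pred1_uniq ur xr); apply: eq_filter => s /=.
by rewrite big_seq1.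
Qed.

Lemma sum_partition_undup (K I : eqType) (W : zmodType) (k : I -> K)
    (l : seq I) (F : I -> W) :
  \sum_(p <- l) F p = \sum_(s <- undup (map k l)) \sum_(p <- l | k p == s) F p.
Proof.
under [RHS]eq_bigr do rewrite big_mkcond.
rewrite exchange_big /=; apply: eq_big_seq => p pl.
rewrite -big_mkcondr (eq_bigl (pred1 (k p))) => [|s]; last exact: eq_sym.
by rewrite sum_pred1_uniq ?undup_uniq // mem_undup map_f.
Qed.

Section Grading.
Variables (Gam : groupType) (V : zmodType) (D : Gam -> V -> Prop).
Hypothesis HD : is_grading D.

Lemma grading0 s : D s 0.
Proof. by case: HD. Qed.

Lemma gradingN s x : D s x -> D s (- x).
Proof. by case: HD => _ HB _ _ Hx; rewrite -sub0r; apply: HB => //; apply: grading0. Qed.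

Lemma gradingD s x y : D s x -> D s y -> D s (x + y).
Proof.
by case: HD => _ HB _ _ Hx Hy; rewrite -[y]opprK; apply: HB => //; apply: gradingN.
Qed.

Lemma grading_sum s I (r : seq I) (P : pred I) (F : I -> V) :
  (forall i, P i -> D s (F i)) -> D s (\sum_(i <- r | P i) F i).
Proof. by move=> H; apply: big_ind => //; [apply: grading0 | apply: gradingD]. Qed.

Definition homog_seq (l : seq (Gam * V)) := forall p, p \in l -> D p.1 p.2.

Definition deg_part (l : seq (Gam * V)) s := \sum_(p <- l | p.1 == s) p.2.

Lemma deg_part_homog l s : homog_seq l -> D s (deg_part l s).
Proof.
move=> hl; rewrite /deg_part big_seq_cond; apply: grading_sum => p /andP [pl /eqP <-].
exact: hl.
Qed.

Lemma homog_decomposition v : exists l, homog_seq l /\ v = \sum_(p <- l) p.2.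
Proof.
case: HD => _ _ HS _; have [n [d [x [Hx ->]]]] := HS v.
exists [seq (d i, x i) | i <- index_enum 'I_n]; split; last by rewrite big_map.
by move=> p /mapP [i _ ->]; apply: Hx.
Qed.

Lemma sum_deg_parts l : \sum_(p <- l) p.2 = \sum_(s <- undup (map fst l)) deg_part l s.
Proof. exact: sum_partition_undup. Qed.

Lemma deg_part_eq0 l : homog_seq l -> \sum_(p <- l) p.2 = 0 ->
  forall s, deg_part l s = 0.
Proof.
move=> hl sum0 s; set S := undup (map fst l).
have uniq_parts : forall i : 'I_(size S), deg_part l (nth 1%g S i) = 0.
  case: HD => _ _ _ HI.
  apply: (HI _ (fun i => nth 1%g S i) (fun i => deg_part l (nth 1%g S i))).
  - by move=> i j /eqP; rewrite nth_uniq ?undup_uniq // => /eqP /val_inj.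
  - by move=> i; apply: deg_part_homog.
  - by rewrite -[RHS]sum0 sum_deg_parts (big_nth 1%g) big_mkord.
have [sS|sS] := boolP (s \in S).
  by have := uniq_parts (Ordinal (etrans (index_mem s S) sS)); rewrite /= nth_index.
apply: big1_seq => p /andP [/eqP ps pl]; case/negP: sS.
by rewrite mem_undup -ps map_f.
Qed.

End Grading.

Lemma grading_reflect (Gam : groupType) (V W : zmodType)
    (D : Gam -> V -> Prop) (E : Gam -> W -> Prop) (f : V -> W) :
  is_grading D -> is_grading E -> {morph f : x y / x + y} -> injective f ->
  (forall t x, D t x -> E t (f x)) -> forall t y, E t (f y) -> D t y.
Proof.
move=> HD HE fD finj fdeg t y Ht.
have [l [hl ey]] := homog_decomposition HD y.
pose l' := (t, - f y) :: [seq (p.1, f p.2) | p <- l].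
have hl' : homog_seq E l'.
  move=> p; rewrite in_cons => /orP [/eqP -> /=|/mapP [q ql ->] /=].
    exact: gradingN.
  exact/fdeg/hl.
have sum0 : \sum_(p <- l') p.2 = 0.
  by rewrite big_cons big_map /= -(additive_sum fD) -ey addNr.
have other_parts0 s : s != t -> deg_part l s = 0.
  move=> st; have := deg_part_eq0 HE hl' sum0 s.
  rewrite /deg_part big_cons /= eq_sym (negbTE st) big_map -(additive_sum fD) => H.
  by apply: finj; rewrite H (additive0 fD).
rewrite ey sum_deg_parts; apply: grading_sum => // s _.
have [-> | st] := eqVneq s t; first exact: deg_part_homog.
by rewrite other_parts0 //; apply: grading0.
Qed.

Section FiniteSpan.
Variables (X T : Type) (W : zmodType) (R : T -> Prop) (h : T -> X -> W).

Definition finsum_span (f : X -> W) := exists n (t : n.-tuple T),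
  (forall i, R (tnth t i)) /\ forall x, f x = \sum_(i < n) h (tnth t i) x.

Lemma finsum_span_ext f g : f =1 g -> finsum_span f -> finsum_span g.
Proof. by move=> fg [n [t [Rt Hf]]]; exists n, t; split=> // x; rewrite -fg. Qed.

Lemma finsum_span0 : finsum_span (fun _ => 0).
Proof. by exists 0%N, [tuple]; split=> [[]|x]; rewrite ?big_ord0. Qed.

Lemma finsum_span1 t : R t -> finsum_span (h t).
Proof.
by exists 1%N, [tuple t]; split=> [i|x]; rewrite ?big_ord1 // (ord1 i).
Qed.

Lemma finsum_spanD f g :
  finsum_span f -> finsum_span g -> finsum_span (fun x => f x + g x).
Proof.
move=> [n1 [t1 [Rt1 Hf]]] [n2 [t2 [Rt2 Hg]]].
exists (n1 + n2)%N, [tuple of t1 ++ t2]; split=> [i|x].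
  by rewrite -(splitK i); case: (split i) => j /=; rewrite ?tnth_lshift ?tnth_rshift.
rewrite Hf Hg big_split_ord.
by congr (_ + _); apply: eq_bigr => i _; rewrite ?tnth_lshift ?tnth_rshift.
Qed.

Lemma finsum_span_sum (I : eqType) (r : seq I) (f : I -> X -> W) :
  (forall i, i \in r -> finsum_span (f i)) ->
  finsum_span (fun x => \sum_(i <- r) f i x).
Proof.
elim: r => [|i r IHr] H.
  by apply: (finsum_span_ext _ finsum_span0) => x; rewrite big_nil.
apply: (finsum_span_ext (f := fun x => f i x + \sum_(j <- r) f j x)).
  by move=> x; rewrite big_cons.
apply: finsum_spanD; first by apply: H; rewrite inE eqxx.
by apply: IHr => j jr; apply: H; rewrite inE jr orbT.
Qed.

End FiniteSpan.

Definition castT (T U : Type) (e : T = U) (x : T) : U :=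
  eq_rect T (fun X : Type => X) x U e.

Lemma castT_id T (e : T = T) x : castT e x = x.
Proof. by rewrite (proof_irrelevance _ e erefl). Qed.

Lemma castT_comp T U V (e1 : T = U) (e2 : U = V) x :
  castT e2 (castT e1 x) = castT (etrans e1 e2) x.
Proof. by case: V / e2; case: U / e1. Qed.

Lemma castT_pi T U (e1 e2 : T = U) x : castT e1 x = castT e2 x.
Proof. by rewrite (proof_irrelevance _ e1 e2). Qed.

Section CastObj.
Variables (Gam : groupType) (B : grRing Gam) (X Y : grObj B) (e : X = Y).

Lemma castO_T x : castO e x = castT (f_equal (fun Z : grObj B => (Z : Type)) e) x.
Proof. by case: Y / e. Qed.

Lemma castOD x y : castO e (x + y) = castO e x + castO e y.
Proof. by case: Y / e. Qed.

Lemma castO_act b x : castO e (go_act b x) = go_act b (castO e x).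
Proof. by case: Y / e. Qed.

Lemma castO_deg t x : go_deg t x -> go_deg t (castO e x).
Proof. by case: Y / e. Qed.

Lemma castOK : cancel (castO e) (castO (esym e)).
Proof. by case: Y / e. Qed.

Lemma castOKV : cancel (castO (esym e)) (castO e).
Proof. by case: Y / e. Qed.

End CastObj.

Section GradedHoms.
Variables (Gam : groupType) (A : grRing Gam).

Lemma grhomD (M N : grObj A) (f : grHom M N) : {morph sval f : x y / x + y}.
Proof. by case: (proj2_sig f). Qed.

Lemma grhomA (M N : grObj A) (f : grHom M N) a x :
  sval f (go_act a x) = go_act a (sval f x).
Proof. by case: (proj2_sig f). Qed.

Lemma grhom_deg (M N : grObj A) (f : grHom M N) t x :
  go_deg t x -> go_deg t (sval f x).
Proof. by case: (proj2_sig f) => _ _; apply. Qed.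

Lemma grhom0 (M N : grObj A) (f : grHom M N) : sval f 0 = 0.
Proof. exact: additive0 (grhomD f). Qed.

Lemma go_act0 (M : grObj A) a : go_act a (0 : M) = 0.
Proof. exact: additive0 (go_actDr a). Qed.

Definition idH (M : grObj A) : grHom M M := exist _ id (And3 (fun _ _ => erefl)
  (fun _ _ => erefl) (fun _ _ => id)).

Definition zeroH (M N : grObj A) : grHom M N.
Proof.
exists (fun _ => 0); split=> [x y|a x|t x _]; rewrite ?addr0 ?go_act0 //.
exact: grading0 (go_grading N) t.
Defined.

Definition compH (M N L : grObj A) (f : grHom M N) (g : grHom N L) : grHom M L.
Proof.
exists (fun x => sval g (sval f x)); split=> [x y|a x|t x Hx].
- by rewrite !grhomD.
- by rewrite !grhomA.
- exact/grhom_deg/grhom_deg.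
Defined.

Definition suspH s (M N : grObj A) (f : grHom M N) : grHom (susp s M) (susp s N).
Proof.
exists (sval f); split=> [x y|a x|t x /= Hx].
- exact: (grhomD f x y).
- exact: (grhomA f a x).
- exact: grhom_deg.
Defined.

Lemma inv_grhom (M N : grObj A) (f : grHom M N) (g : N -> M) :
  cancel (sval f) g -> cancel g (sval f) -> is_grhom g.
Proof.
move=> fK gK; have finj := can_inj fK.
split=> [x y|a x|t x Hx].
- by apply: finj; rewrite grhomD !gK.
- by apply: finj; rewrite grhomA !gK.
- apply: (grading_reflect (go_grading M) (go_grading N) (grhomD f) finj).
    by move=> t' z; apply: grhom_deg.
  by rewrite gK.
Qed.

Lemma bijective_cancels (T U : Type) (f : T -> U) :
  bijective f -> exists g, cancel f g /\ cancel g f.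
Proof. by case=> g fK gK; exists g. Qed.

Definition invH (M N : grObj A) (f : grHom M N) (fB : bijective (sval f)) : grHom N M :=
  let: exist g (conj fK gK) := constructive_indefinite_description _ (bijective_cancels fB)
  in exist _ g (inv_grhom fK gK).

Lemma invHK (M N : grObj A) (f : grHom M N) (fB : bijective (sval f)) :
  cancel (sval f) (sval (invH fB)).
Proof.
by rewrite /invH; case: constructive_indefinite_description => g [].
Qed.

Lemma invHKV (M N : grObj A) (f : grHom M N) (fB : bijective (sval f)) :
  cancel (sval (invH fB)) (sval f).
Proof.
by rewrite /invH; case: constructive_indefinite_description => g [].
Qed.

(* For q of degree t the values f s q have the pairwise distinct degrees t s. *)
Lemma grmap_sum_eq0 (P N : grObj A) (S : seq Gam) (f : Gam -> P -> N) :
  uniq S -> (forall s, is_grmap s (f s)) -> (forall q, \sum_(s <- S) f s q = 0) ->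
  forall s, s \in S -> forall q, f s q = 0.
Proof.
move=> uS fgr sum0 s0 s0S q.
have [lq [hq ->]] := homog_decomposition (go_grading P) q.
have [f0D _ _] := fgr s0.
rewrite (additive_sum f0D); apply: big1_seq => p /andP [_ pl].
pose l := [seq ((p.1 * s)%g, f s p.2) | s <- S].
have hl : homog_seq (@go_deg _ _ N) l.
  by move=> p' /mapP [s _ ->] /=; case: (fgr s) => _ _; apply; apply: hq.
have suml0 : \sum_(p' <- l) p'.2 = 0 by rewrite big_map sum0.
have := deg_part_eq0 (go_grading N) hl suml0 (p.1 * s0)%g.
rewrite /deg_part big_map (eq_bigl (pred1 s0)) => [|s]; last exact: (inj_eq (mulgI p.1)).
by rewrite sum_pred1_uniq.
Qed.

Lemma GrObj_eq (V : zmodType) act p1 p2 p3 (d1 d2 : Gam -> V -> Prop) g1 g2 ad1 ad2 u tf :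
  d1 = d2 ->
  @GrObj _ A V act p1 p2 p3 d1 g1 ad1 u tf = @GrObj _ A V act p1 p2 p3 d2 g2 ad2 u tf.
Proof. by move=> E; subst d2; f_equal; apply: proof_irrelevance. Qed.

Lemma suspM (M : grObj A) s s' : susp s' (susp s M) = susp (s' * s)%g M.
Proof.
apply: GrObj_eq.
by do 2 (apply: functional_extensionality => ?); rewrite mulgA.
Qed.

Lemma suspKV (M : grObj A) r d : susp r^-1 (susp (r * d) M) = susp d M.
Proof. by rewrite suspM mulKg. Qed.

End GradedHoms.

Section FunctorFacts.
Variables (Gam : groupType) (A B : grRing Gam) (F : grFunctor A B).

Lemma fm_ext (M N : grObj A) (f g : grHom M N) :
  (forall x, sval f x = sval g x) -> forall y, sval (fm F f) y = sval (fm F g) y.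
Proof.
move=> fg y; rewrite (@fm_comp _ _ _ F M N N g (idH N) f) //.
exact: fm_id.
Qed.

Lemma fm_zeroH (M N : grObj A) y : sval (fm F (zeroH M N)) y = 0.
Proof.
have := @fm_add _ _ _ F M N (zeroH M N) (zeroH M N) (zeroH M N) (fun _ => esym (addr0 0)) y.
by move/(congr1 (fun z => z - sval (fm F (zeroH M N)) y)); rewrite subrr addrK.
Qed.

Lemma fm_transport (X Y : grObj A) (e : X = Y) (Z : grObj A)
    (f1 : grHom Z X) (f2 : grHom Z Y) :
  (forall z, sval f2 z = castO e (sval f1 z)) ->
  forall y, sval (fm F f2) y = castO (f_equal (fo F) e) (sval (fm F f1) y).
Proof. by move: f2; case: Y / e => f2 H y /=; apply: fm_ext => z; rewrite H. Qed.

End FunctorFacts.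

Section Faithful.
Variables (Gam : groupType) (A B : grRing Gam) (F : grFunctor A B) (G : grFunctor B A).
Variable e : forall M : grObj A, grHom (fo G (fo F M)) M.
Hypothesis e_bij : forall M, bijective (sval (e M)).
Hypothesis e_nat : forall M M' (f : grHom M M') y,
  sval (e M') (sval (fm G (fm F f)) y) = sval f (sval (e M) y).

Lemma fm_inj (M M' : grObj A) (u v : grHom M M') :
  (forall y, sval (fm F u) y = sval (fm F v) y) -> forall x, sval u x = sval v x.
Proof.
move=> Fuv x; case: (e_bij M) => e' eK Ke.
by rewrite -(Ke x) -!e_nat; congr (sval _ _); apply: fm_ext.
Qed.

End Faithful.

Section Representation.
Variables (Gam : groupType) (A B : grRing Gam).
Variables (HIA : gr_idempotent A) (HTA : gr_torsionfree A).
Variables (F : grFunctor A B) (G : grFunctor B A).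
Variable eGF : forall M : grObj A, grHom (fo G (fo F M)) M.
Hypothesis eGF_bij : forall M, bijective (sval (eGF M)).
Hypothesis eGF_nat : forall M M' (f : grHom M M') y,
  sval (eGF M') (sval (fm G (fm F f)) y) = sval f (sval (eGF M) y).
Variable eFG : forall N : grObj B, grHom (fo F (fo G N)) N.
Hypothesis eFG_bij : forall N, bijective (sval (eFG N)).
Hypothesis eFG_nat : forall N N' (g : grHom N N') y,
  sval (eFG N') (sval (fm F (fm G g)) y) = sval g (sval (eFG N) y).

Local Notation Areg := (regObj HIA HTA).
Local Notation Q := (Qobj F HIA HTA).
Local Notation qa Ha q := (@ract _ _ _ F HIA HTA _ _ Ha q).

Lemma F_full (X Y : grObj A) (h : grHom (fo F X) (fo F Y)) :
  exists psi : grHom X Y, forall y, sval (fm F psi) y = sval h y.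
Proof.
exists (compH (compH (invH (eGF_bij X)) (fm G h)) (eGF Y)).
apply: (fm_inj eFG_bij eFG_nat) => z.
by apply: (bij_inj (eGF_bij Y)); rewrite eGF_nat /= invHK.
Qed.

Definition lmulHom (M : grObj A) s (x : M) (Hx : go_deg s x) : grHom Areg (susp s M).
Proof.
exists (fun a => go_act a x); split=> [a b|a b|t a Ha].
- exact: go_actDl.
- exact: go_actA.
- exact: go_act_deg.
Defined.

(* Junk value 0 when x is not homogeneous of degree s. *)
Definition theta_h (N : grObj B) s (x : fo G N) (q : Q) : N :=
  match excluded_middle_informative (go_deg s x) with
  | left Hx => sval (eFG N) (castO (fo_susp F s (fo G N)) (sval (fm F (lmulHom Hx)) q))
  | right _ => 0
  end.
Arguments theta_h : clear implicits.

Section FixedTarget.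
Variable N : grObj B.
Local Notation M := (fo G N).
Local Notation th := (theta_h N).

Lemma theta_hE s (x : M) (Hx : go_deg s x) q :
  th s x q = sval (eFG N) (castO (fo_susp F s M) (sval (fm F (lmulHom Hx)) q)).
Proof.
rewrite /theta_h; case: excluded_middle_informative => [H|//].
by rewrite (proof_irrelevance _ H Hx).
Qed.

Lemma theta_h_grmap s x : go_deg s x -> is_grmap s (th s x).
Proof.
move=> Hx; split=> [q1 q2|b q|t q Hq]; rewrite !(theta_hE Hx).
- by rewrite grhomD castOD grhomD.
- by rewrite grhomA castO_act grhomA.
- exact (grhom_deg (eFG N) (castO_deg (fo_susp F s M) (grhom_deg (fm F (lmulHom Hx)) Hq))).
Qed.

Lemma theta_hD s (x y : M) q :
  go_deg s x -> go_deg s y -> th s (x + y) q = th s x q + th s y q.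
Proof.
move=> Hx Hy; have Hxy := gradingD (go_grading M) Hx Hy.
rewrite !theta_hE (@fm_add _ _ _ F _ _ (lmulHom Hx) (lmulHom Hy) (lmulHom Hxy)).
  by rewrite castOD grhomD.
by move=> a /=; rewrite go_actDr.
Qed.

Lemma theta_h0 s q : th s 0 q = 0.
Proof.
rewrite (theta_hE (grading0 (go_grading M) s)).
rewrite (@fm_ext _ _ _ F _ _ _ (zeroH _ _)) => [|a]; last exact: go_act0.
by rewrite fm_zeroH (additive0 (castOD _)) grhom0.
Qed.

Lemma theta_hN s (x : M) q : go_deg s x -> th s (- x) q = - th s x q.
Proof.
move=> Hx; apply: (@addrI _ (th s x q)).
by rewrite -theta_hD ?subrr ?theta_h0 //; apply: gradingN (go_grading M) _ _ Hx.
Qed.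

Lemma theta_h_sum s I (r : seq I) (P : pred I) (X : I -> M) q :
  (forall i, P i -> go_deg s (X i)) ->
  th s (\sum_(i <- r | P i) X i) q = \sum_(i <- r | P i) th s (X i) q.
Proof.
move=> H; elim: r => [|i r IH]; rewrite ?big_nil ?big_cons ?theta_h0 //.
case: (boolP (P i)) => Pi //; rewrite theta_hD ?IH //; first exact: H.
by apply: (grading_sum (go_grading M)) => j; apply: H.
Qed.

Lemma theta_h_deg_parts (l : seq (Gam * M)) q : homog_seq (@go_deg _ _ M) l ->
  \sum_(p <- l) th p.1 p.2 q =
  \sum_(s <- undup (map fst l)) th s (deg_part l s) q.
Proof.
move=> hl; rewrite (sum_partition_undup fst); apply: eq_bigr => s _.
rewrite /deg_part big_seq_cond [in RHS]big_seq_cond theta_h_sum.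
  by apply: eq_bigr => p /andP [_ /eqP ->].
by move=> p /andP [pl /eqP <-]; apply: hl.
Qed.

Lemma theta_h_sum_eq0 (l : seq (Gam * M)) q : homog_seq (@go_deg _ _ M) l ->
  \sum_(p <- l) p.2 = 0 -> \sum_(p <- l) th p.1 p.2 q = 0.
Proof.
move=> hl sum0; rewrite theta_h_deg_parts //; apply: big1 => s _.
by rewrite (deg_part_eq0 (go_grading M) hl sum0) theta_h0.
Qed.

Lemma theta_h_sum_eq (l1 l2 : seq (Gam * M)) q :
  homog_seq (@go_deg _ _ M) l1 -> homog_seq (@go_deg _ _ M) l2 ->
  \sum_(p <- l1) p.2 = \sum_(p <- l2) p.2 ->
  \sum_(p <- l1) th p.1 p.2 q = \sum_(p <- l2) th p.1 p.2 q.
Proof.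
move=> h1 h2 e.
pose l := l1 ++ [seq (p.1, - p.2) | p <- l2].
have hl : homog_seq (@go_deg _ _ M) l.
  move=> p; rewrite mem_cat => /orP [/h1 //|/mapP [p' /h2 H ->] /=].
  exact: gradingN (go_grading M) _ _ H.
have := theta_h_sum_eq0 q hl.
rewrite !big_cat !big_map /= sumrN e subrr => /(_ erefl) /eqP.
rewrite [X in _ + X]big_seq [X in _ + X](eq_bigr (fun p => - th p.1 p.2 q)).
  by rewrite -big_seq sumrN subr_eq0 => /eqP.
by move=> p pl; rewrite theta_hN //; apply: h2.
Qed.

Definition homog_dec (x : M) : seq (Gam * M) :=
  sval (constructive_indefinite_description _ (homog_decomposition (go_grading M) x)).

Lemma homog_decP x :
  homog_seq (@go_deg _ _ M) (homog_dec x) /\ x = \sum_(p <- homog_dec x) p.2.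
Proof.
by rewrite /homog_dec; case: constructive_indefinite_description.
Qed.

Definition theta (x : M) (q : Q) : N := \sum_(p <- homog_dec x) th p.1 p.2 q.

Lemma thetaE (l : seq (Gam * M)) x q :
  homog_seq (@go_deg _ _ M) l -> x = \sum_(p <- l) p.2 -> theta x q = \sum_(p <- l) th p.1 p.2 q.
Proof.
move=> hl ex; case: (homog_decP x) => hd ed.
by apply: theta_h_sum_eq => //; rewrite -ed -ex.
Qed.

Lemma theta_homog s x q : go_deg s x -> theta x q = th s x q.
Proof.
move=> Hx; rewrite (@thetaE [:: (s, x)]) ?big_seq1 //.
by move=> p; rewrite inE => /eqP ->.
Qed.

Lemma theta_grmap s x : go_deg s x -> is_grmap s (theta x).
Proof.
move=> Hx; rewrite (functional_extensionality _ _ (fun q => theta_homog q Hx)).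
exact: theta_h_grmap.
Qed.

Lemma thetaD x y q : theta (x + y) q = theta x q + theta y q.
Proof.
case: (homog_decP x) => hx ex; case: (homog_decP y) => hy ey.
rewrite (@thetaE (homog_dec x ++ homog_dec y)) ?big_cat -?ex -?ey //.
by move=> p; rewrite mem_cat => /orP [/hx|/hy].
Qed.

(* lambda_(psi a) = psi o rho_a, once M(r d)(r^-1) is identified with M(d). *)
Lemma theta_h_lmul d (psi : grHom Areg (susp d M)) r (a : A) (Ha : gr_deg r a) q :
  th (r * d)%g (sval psi a) q =
  sval (eFG N) (castO (fo_susp F d M) (sval (fm F psi) (qa Ha q))).
Proof.
have Hx : @go_deg _ _ M (r * d)%g (sval psi a) := grhom_deg psi Ha.
rewrite (theta_hE Hx); congr (sval _ _).
pose rho := rmulHom HIA HTA Ha.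
pose q' := castO (esym (fo_susp F r^-1 Areg)) q.
have -> : qa Ha q = sval (fm F rho) q' by [].
rewrite -(@fm_comp _ _ _ F _ _ _ rho psi (compH rho psi)) //.
have := @fm_susp _ _ _ F r^-1 Areg (susp (r * d) M) (lmulHom Hx)
  (suspH r^-1 (lmulHom Hx)) (fun _ => erefl) q'.
rewrite castOKV => <-.
rewrite (@fm_transport _ _ _ F _ _ (suspKV M r d) _ (suspH r^-1 (lmulHom Hx))
  (compH rho psi)) => [|z /=]; last first.
  by rewrite castO_T castT_id; apply: (grhomA psi z a).
by rewrite !castO_T !castT_comp; apply: castT_pi.
Qed.

Lemma theta_h_act s (x : M) (Hx : go_deg s x) r (a : A) (Ha : gr_deg r a) q :
  th (r * s)%g (go_act a x) q = th s x (qa Ha q).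
Proof. by rewrite (theta_hE Hx); apply: (theta_h_lmul (lmulHom Hx) Ha). Qed.

Lemma theta_act r (a : A) (Ha : gr_deg r a) x q : theta (go_act a x) q = theta x (qa Ha q).
Proof.
case: (homog_decP x) => hx ex.
rewrite (@thetaE [seq ((r * p.1)%g, go_act a p.2) | p <- homog_dec x]).
- by rewrite big_map /theta; apply: eq_big_seq => p pl /=; apply/theta_h_act/hx.
- by move=> p /mapP [p' pl ->] /=; apply/go_act_deg/hx.
- by rewrite big_map {1}ex (additive_sum (go_actDr a)).
Qed.

Lemma theta_h_eq0 s (c : M) : go_deg s c -> (forall q, th s c q = 0) -> c = 0.
Proof.
move=> Hc H.
have Flam0 q : sval (fm F (lmulHom Hc)) q = sval (fm F (zeroH Areg (susp s M))) q.
  rewrite fm_zeroH; apply: (can_inj (castOK (fo_susp F s M))).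
  apply: (bij_inj (eFG_bij N)).
  by rewrite -theta_hE H (additive0 (castOD _)) grhom0.
by apply: go_tfree => a; apply: (fm_inj eGF_bij eGF_nat Flam0).
Qed.

Lemma theta_eq0 x : (forall q, theta x q = 0) -> x = 0.
Proof.
move=> H; case: (homog_decP x) => hx ex.
have Hc s : go_deg s (deg_part (homog_dec x) s) := deg_part_homog (go_grading M) s hx.
rewrite ex sum_deg_parts big_seq big1 // => s sS; apply: (theta_h_eq0 (Hc s)).
apply: (grmap_sum_eq0 (f := fun s => th s (deg_part (homog_dec x) s)) (undup_uniq _) _ _ sS).
- by move=> s'; apply: theta_h_grmap.
- by move=> q; rewrite -theta_h_deg_parts //; apply: H.
Qed.

Lemma theta_inj x y : (forall q, theta x q = theta y q) -> x = y.
Proof.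
move=> Hxy; apply/eqP; rewrite -subr_eq0; apply/eqP/theta_eq0 => q.
by rewrite thetaD (additiveN (fun u v => thetaD u v q)) Hxy subrr.
Qed.

Lemma graded_factor d (g : Q -> N) : is_grmap d g ->
  exists psi : grHom Areg (susp d M),
    forall q, sval (eFG N) (castO (fo_susp F d M) (sval (fm F psi) q)) = g q.
Proof.
case=> gD gA gdeg.
pose iv := invH (eFG_bij N).
pose g' q := castO (esym (fo_susp F d M)) (sval iv (g q)).
have g'_grhom : @is_grhom _ B Q (fo F (susp d M)) g'.
  split=> [q1 q2|b q|t q Hq]; rewrite /g'.
  - by rewrite gD grhomD castOD.
  - by rewrite gA grhomA castO_act.
  - exact (castO_deg (esym (fo_susp F d M)) (grhom_deg iv (gdeg _ _ Hq))).
have [psi Hpsi] := F_full (exist _ _ g'_grhom).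
by exists psi => q; rewrite Hpsi /g' castOKV invHKV.
Qed.

Lemma theta_image_homog d (g : Q -> N) r (a : A) (Ha : gr_deg r a) :
  is_grmap d g -> exists x, forall q, theta x q = g (qa Ha q).
Proof.
move=> gg; have [psi Hpsi] := graded_factor gg.
have Hpa : @go_deg _ _ M (r * d)%g (sval psi a) := grhom_deg psi Ha.
by exists (sval psi a) => q; rewrite (theta_homog _ Hpa) theta_h_lmul Hpsi.
Qed.

Lemma theta_image_sum n (u : 'I_n -> Q -> N) :
  (forall j, exists x, forall q, theta x q = u j q) ->
  exists x, forall q, theta x q = \sum_(j < n) u j q.
Proof.
move=> H; pose xs j := sval (constructive_indefinite_description _ (H j)).
have Hxs j q : theta (xs j) q = u j q.
  exact: (proj2_sig (constructive_indefinite_description _ (H j))).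
exists (\sum_(j < n) xs j) => q.
by rewrite (additive_sum (fun u v => thetaD u v q)); apply: eq_bigr => j _; apply: Hxs.
Qed.

Local Notation inHOM := (@inHOM _ _ _ F HIA HTA N).
Local Notation inAHOM := (@inAHOM _ _ _ F HIA HTA N).
Local Notation homog_scalar := {ra : Gam * A | gr_deg ra.1 ra.2}.

Lemma inHOM_of_span (f : Q -> N) :
  finsum_span (fun p : Gam * (Q -> N) => is_grmap p.1 p.2) snd f -> inHOM f.
Proof.
move=> [n [t [Ht Hf]]].
by exists n, (fun i => (tnth t i).1), (fun i => (tnth t i).2).
Qed.

Lemma inAHOM_of_span (f : Q -> N) :
  finsum_span (fun p : homog_scalar * (Q -> N) => inHOM p.2)
    (fun (p : homog_scalar * (Q -> N)) q => p.2 (qa (proj2_sig p.1) q)) f -> inAHOM f.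
Proof.
move=> [n [t [Ht Hf]]].
by exists n, (fun i => (sval (tnth t i).1).1), (fun i => (sval (tnth t i).1).2),
  (fun i => proj2_sig (tnth t i).1), (fun i => (tnth t i).2).
Qed.

Lemma theta_inHOM x : inHOM (theta x).
Proof.
case: (homog_decP x) => hx _; apply: inHOM_of_span.
apply: (finsum_span_sum (f := fun p q => th p.1 p.2 q)) => p pl.
exact: (@finsum_span1 _ _ _ _ snd (p.1, th p.1 p.2) (theta_h_grmap (hx p pl))).
Qed.

Lemma theta_inAHOM x : inAHOM (theta x).
Proof.
have [n [a [xs ex]]] := go_unital x.
apply: inAHOM_of_span.
apply: (finsum_span_ext (f := fun q => \sum_(i < n) theta (go_act (a i) (xs i)) q)).
  by move=> q; rewrite ex (additive_sum (fun u v => thetaD u v q)).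
apply: finsum_span_sum => i _.
have [la [hla ea]] := homog_decomposition (gr_grading A) (a i).
apply: (finsum_span_ext (f := fun q => \sum_(p <- la) theta (go_act p.2 (xs i)) q)).
  move=> q; rewrite [in RHS]ea (additive_sum (fun u v => go_actDl u v (xs i))).
  by rewrite (additive_sum (fun u v => thetaD u v q)).
apply: finsum_span_sum => p pl.
apply: (finsum_span_ext (f := fun q => theta (xs i) (qa (hla p pl) q))).
  by move=> q; rewrite (theta_act (hla p pl)).
pose t : homog_scalar * (Q -> N) := (exist _ p (hla p pl), theta (xs i)).
by apply: (@finsum_span1 _ _ _ _ _ t); apply: theta_inHOM.
Qed.

Lemma inAHOM_theta f : inAHOM f -> exists x, forall q, theta x q = f q.
Proof.
move=> [n [d [a [Ha [h [hh fq]]]]]].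
have [x Hx] : exists x, forall q, theta x q = \sum_(i < n) h i (qa (Ha i) q).
  apply: theta_image_sum => i.
  have [m [dd [gg [hg hq]]]] := hh i.
  have [x Hx] : exists x, forall q, theta x q = \sum_(j < m) gg j (qa (Ha i) q).
    by apply: theta_image_sum => j; apply: theta_image_homog.
  by exists x => q; rewrite Hx hq.
by exists x => q; rewrite Hx fq.
Qed.

End FixedTarget.

Arguments theta : clear implicits.

Lemma theta_h_nat N N' (g : grHom N N') s (x : fo G N) q : go_deg s x ->
  theta_h N' s (sval (fm G g) x) q = sval g (theta_h N s x q).
Proof.
move=> Hx; have Hgx : go_deg s (sval (fm G g) x) := grhom_deg (fm G g) Hx.
rewrite (theta_hE Hgx) (theta_hE Hx) -eFG_nat; congr (sval _ _).
rewrite (@fm_comp _ _ _ F _ _ _ (lmulHom Hx) (suspH s (fm G g)) (lmulHom Hgx)).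
  exact: (@fm_susp _ _ _ F s _ _ (fm G g) (suspH s (fm G g)) (fun _ => erefl)).
by move=> a /=; rewrite grhomA.
Qed.

Lemma theta_nat N N' (g : grHom N N') x q :
  theta N' (sval (fm G g) x) q = sval g (theta N x q).
Proof.
case: (homog_decP x) => hx ex.
rewrite (@thetaE N' [seq (p.1, sval (fm G g) p.2) | p <- homog_dec x]).
- rewrite big_map /theta (additive_sum (grhomD g)).
  by apply: eq_big_seq => p pl /=; apply/theta_h_nat/hx.
- by move=> p /mapP [p' pl ->] /=; apply/grhom_deg/hx.
- by rewrite big_map {1}ex (additive_sum (grhomD _)).
Qed.

Lemma HOM_repr_of_equiv : HOM_repr F HIA HTA G.
Proof.
exists theta; split; first exact: thetaD.
split; first by move=> N r a Ha x q; apply: theta_act.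
split; first by move=> N s x; apply: theta_grmap.
split; first by move=> N x y; apply: theta_inj.
split; last by move=> N N' g x q; apply: theta_nat.
move=> N f; split; first exact: inAHOM_theta.
by case=> x /functional_extensionality <-; apply: theta_inAHOM.
Qed.

End Representation.

Theorem proposition3p9 (Gam : groupType) (A B : grRing Gam)
  (HIA : gr_idempotent A) (HTA : gr_torsionfree A)
  (HIB : gr_idempotent B) (HTB : gr_torsionfree B)
  (F : grFunctor A B) (G : grFunctor B A) :
  inverse_equiv F G ->
  HOM_repr F HIA HTA G /\ HOM_repr G HIB HTB F.
Proof.
case=> [[eGF [eGF_bij eGF_nat]] [eFG [eFG_bij eFG_nat]]]; split.
- exact: (HOM_repr_of_equiv HIA HTA eGF_bij eGF_nat eFG_bij eFG_nat).
- exact: (HOM_repr_of_equiv HIB HTB eFG_bij eFG_nat eGF_bij eGF_nat).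
Qed.
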